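(* Let $Z\colon\mathbb{R}^n\to\mathbb{R}^m$ be a jointly measurable random map defined on the probability space $(\Omega,\mathcal{F},\mathbb{P})$. Let $\mu$ be a Borel probability measure on $\mathbb{R}^n$ and let $\gamma\in\mathbb{R}$. Then the set $$\mathcal{D}=\Big\{(\omega,t)\in\Omega\times\mathbb{R}^n:\ \liminf_{r\to0+}r^{-\gamma}\mu(\{s: Z(s,\omega)\in B(Z(t,\omega),r)\})=0\Big\}$$ belongs to $\mathcal{F}\otimes\mathcal{B}(\mathbb{R}^n)$.
   Context: $Z$ is jointly measurable if $(t,\omega)\mapsto Z(t,\omega)$ is measurable from $\mathcal{B}(\mathbb{R}^n)\otimes\mathcal{F}$ to $\mathcal{B}(\mathbb{R}^m)$. $B(z,r)$ is the closed Euclidean ball in $\mathbb{R}^m$. *)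

From HB Require Import structures.
From mathcomp Require Import all_boot all_order all_algebra.
From mathcomp Require Import all_classical all_reals all_analysis.
Set Implicit Arguments. Unset Strict Implicit. Unset Printing Implicit Defensive.
Import Order.TTheory GRing.Theory Num.Theory.
Import numFieldTopology.Exports.
Local Open Scope ring_scope.
Local Open Scope classical_set_scope.

(* R^k is modelled as k.-tuple R, whose canonical measurable structure is the
   product sigma-algebra of the Borel sets of R, i.e. the Borel sets of R^k. *)

Definition euclid_dist (R : realType) (k : nat) (x y : k.-tuple R) : R :=
  Num.sqrt (\sum_(i < k) (tnth x i - tnth y i) ^+ 2).

Definition cball_euclid (R : realType) (k : nat) (z : k.-tuple R) (r : R)
  : set (k.-tuple R) := [set y | euclid_dist y z <= r].

Definition set_D (R : realType) (n m : nat) (Omega : Type)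
  (Z : n.-tuple R -> Omega -> m.-tuple R)
  (mu : set (n.-tuple R) -> \bar R) (gamma : R) : set (Omega * n.-tuple R) :=
  [set p | limf_einf
      (fun r : R => ((r `^ (- gamma))%:E *
         mu [set s | Z s p.1 \in cball_euclid (Z p.2 p.1) r])%E)
      ((0 : R)^'+) = 0%E].

From HB Require Import structures.
From mathcomp Require Import all_boot all_order all_algebra.
From mathcomp Require Import all_classical all_reals all_analysis.
From mathcomp Require Import measurable_realfun.
Set Implicit Arguments.
Unset Strict Implicit.
Unset Printing Implicit Defensive.
Import Order.TTheory GRing.Theory Num.Theory.
Import numFieldTopology.Exports.
Local Open Scope ring_scope.
Local Open Scope classical_set_scope.

(* For fixed r, (w, t) |-> mu (B (Z t w) r) is measurable: it is the mu-measure
   of the section at (w, t) of the measurable set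
   {((w, t), s) | |Z s w - Z t w| <= r}.  Since mu (B z q) <= mu (B z r) for
   q <= r and r |-> r ^ (- gamma) is continuous on ]0, +oo[, a value of
   r ^ (- gamma) * mu (B z r) below e is still below e at rationals slightly
   to the left of r.  Hence the liminf at 0+ vanishes iff for all k, j some
   rational q in ]0, 1/(j+1)[ gives a value below 1/(k+1): a countable
   intersection of countable unions of measurable sets. *)

Section euclid_ball.
Variable R : realType.

Lemma measurable_euclid_dist d (X : measurableType d) k
    (f g : X -> k.-tuple R) :
  measurable_fun setT f -> measurable_fun setT g ->
  measurable_fun setT (fun x => euclid_dist (f x) (g x)).
Proof.
move=> mf mg.
apply: measurableT_comp (continuous_measurable_fun (@sqrt_continuous R)) _.
apply: measurable_sum => i; apply: measurable_funX; apply: measurable_funB.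
- exact: measurableT_comp (measurable_tnth i) mf.
- exact: measurableT_comp (measurable_tnth i) mg.
Qed.

Lemma cball_euclid_le k (z : k.-tuple R) (r r' : R) :
  r <= r' -> cball_euclid z r `<=` cball_euclid z r'.
Proof. by move=> rr' y /le_trans; apply. Qed.

Lemma measurable_mem_cball d (X : measurableType d) k (f g : X -> k.-tuple R)
    (r : R) :
  measurable_fun setT f -> measurable_fun setT g ->
  measurable [set x | f x \in cball_euclid (g x) r].
Proof.
move=> mf mg; have := measurable_euclid_dist mf mg measurableT
  (measurable_itv `]-oo, r]%R).
by rewrite setTI; congr measurable; apply/seteqP; split => x;
  rewrite /= in_itv /= in_setE.
Qed.

Lemma measurable_measure_cball d1 d2 (X : measurableType d1)
    (T : measurableType d2) (mu : {sigma_finite_measure set T -> \bar R}) k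
    (W : X -> T -> k.-tuple R) (c : X -> k.-tuple R) (r : R) :
  measurable_fun setT (fun xs : X * T => W xs.1 xs.2) ->
  measurable_fun setT c ->
  measurable_fun setT (fun x => mu [set s | W x s \in cball_euclid (c x) r]).
Proof.
move=> mW mc.
pose A := [set xs : X * T | W xs.1 xs.2 \in cball_euclid (c xs.1) r].
have mA : measurable A.
  exact: measurable_mem_cball mW (measurableT_comp mc measurable_fst).
rewrite (_ : (fun x => _) = mu \o xsection A).
  exact: measurable_fun_xsection.
by apply/funext => x; congr (mu _); apply: eq_set => s; rewrite [RHS]in_setE.
Qed.

End euclid_ball.

Lemma powR_mule_lt_at_left_rat (R : realType) (gamma : R) (M : R -> \bar R)
    (r e : R) :
  {homo M : s t / s <= t >-> (s <= t)%E} -> M r \is a fin_num -> 0 < r ->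
  ((r `^ (- gamma))%:E * M r < e%:E)%E ->
  exists2 q : rat, 0 < (ratr q : R) < r &
    ((ratr q `^ (- gamma))%:E * M (ratr q) < e%:E)%E.
Proof.
move=> M_nd /fineK Mr r0; rewrite -Mr -EFinM lte_fin.
set c := fine (M r) in Mr * => lt_e.
have powR_cont : {for r, continuous (fun t : R => t `^ (- gamma))}.
  apply/differentiable_continuous/derivable1_diffP.
  by apply: derivable_powR; rewrite in_itv /= andbT.
have /nbhs_ballP[eta eta0 near_e] : \forall t \near r, t `^ (- gamma) * c < e.
  exact: cvgr_lt (cvgMr_tmp powR_cont) _ lt_e.
have lt_max : Num.max 0 (r - eta) < r by rewrite gt_max r0 ltrBlDr ltrDl.
have [q] := rat_in_itvoo lt_max.
rewrite in_itv /= gt_max => /andP[/andP[q0 rq] qr].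
exists q; first by rewrite q0.
apply: (@le_lt_trans _ _ ((ratr q `^ (- gamma))%:E * M r)%E).
  by apply: lee_wpmul2l; [rewrite lee_fin powR_ge0 | exact/M_nd/ltW].
rewrite -Mr -EFinM lte_fin; apply: near_e.
by rewrite /ball /= gtr0_norm ?subr_gt0 // ltrBlDr -ltrBlDl.
Qed.

Lemma limf_einf_at_right0_eq0P (R : realType) (g : R -> \bar R) :
  (forall r, 0 <= g r)%E ->
  limf_einf g 0^'+ = 0%E <->
  (forall k j : nat, exists2 r, 0 < r < j.+1%:R^-1 & (g r < k.+1%:R^-1%:E)%E).
Proof.
move=> g_ge0; split => [g0 k j | small].
  pose V := [set r : R | 0 < r < j.+1%:R^-1].
  have V_near : \forall r \near 0^'+, V r.
    near=> r; apply/andP; split; near: r; first exact: nbhs_right_gt.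
    by apply: nbhs_right_lt; rewrite invr_gt0.
  have : (ereal_inf (g @` V) < k.+1%:R^-1%:E)%E.
    apply: (@le_lt_trans _ _ 0%E); last by rewrite lte_fin invr_gt0.
    by rewrite -g0 limf_einfE; apply: ereal_sup_ubound; exists V.
  by case/ereal_inf_lt => _ [r Vr <-]; exists r.
apply/eqP; rewrite eq_le limf_einfE; apply/andP; split.
  apply: ge_ereal_sup => _ [V /nbhs_ballP[del del0 V_del] <-].
  apply/lee_addgt0Pr => e e0; rewrite add0e.
  have [k] := ltr_add_invr e0; have [j] := ltr_add_invr del0.
  rewrite !add0r => jdel ke; have [r /andP[r0 rj] gr] := small k j.
  apply: ge_ereal_inf; exists (g r); last exact/ltW/(lt_le_trans gr)/ltW.
  exists r => //; apply: V_del => //.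
  by rewrite /ball /= sub0r normrN gtr0_norm // (lt_trans rj).
apply: le_ereal_sup_tmp; exists (ereal_inf (g @` setT)).
  by exists setT => //; exact: filterT.
by apply: le_ereal_inf_tmp => _ [r _ <-]; exact: g_ge0.
Unshelve. all: by end_near.
Qed.

Lemma bigcup_measurable_rat d (T : sigmaRingType d) (Q : set rat)
    (F : rat -> set T) :
  (forall q, Q q -> measurable (F q)) -> measurable (\bigcup_(q in Q) F q).
Proof.
move=> mF; rewrite bigcup_mkcond; apply: bigcupT_measurable_rat => q.
by case: ifPn => [/set_mem/mF | _].
Qed.

Lemma measurable_limf_einf_at_right0_eq0 (R : realType) d
    (X : measurableType d) (g : X -> R -> \bar R) :
  (forall p r, 0 <= g p r)%E ->
  (forall p r e, 0 < r -> (g p r < e%:E)%E ->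
    exists2 q : rat, 0 < (ratr q : R) < r & (g p (ratr q) < e%:E)%E) ->
  (forall q : rat, measurable_fun setT (g^~ (ratr q))) ->
  measurable [set p | limf_einf (g p) 0^'+ = 0%E].
Proof.
move=> g_ge0 g_rat mg.
have -> : [set p | limf_einf (g p) 0^'+ = 0%E] =
    \bigcap_(k in setT) \bigcap_(j in setT)
      \bigcup_(q in [set q : rat | 0 < (ratr q : R) < j.+1%:R^-1])
        [set p | (g p (ratr q) < k.+1%:R^-1%:E)%E].
  apply/seteqP; split => p /=.
  - move=> /(limf_einf_at_right0_eq0P (g_ge0 p)) small k _ j _.
    have [r /andP[r0 rj] /(g_rat _ _ _ r0)[q /andP[q0 qr] gq]] := small k j.
    by exists q; rewrite //= q0 (lt_trans qr rj).
  - move=> small; apply/(limf_einf_at_right0_eq0P (g_ge0 p)) => k j.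
    by have [q qj gq] := small k I j I; exists (ratr q).
apply: bigcapT_measurable => k; apply: bigcapT_measurable => j.
apply: bigcup_measurable_rat => q _; rewrite -[X in measurable X]setTI.
exact: measurable_lte.
Qed.

Theorem lemma3p5 (R : realType) (d : measure_display) (Omega : measurableType d)
  (P : probability Omega R) (n m : nat)
  (Z : n.-tuple R -> Omega -> m.-tuple R)
  (hZ : measurable_fun [set: n.-tuple R * Omega]
          (fun p : n.-tuple R * Omega => Z p.1 p.2))
  (mu : probability (n.-tuple R) R) (gamma : R) :
  measurable (set_D Z mu gamma).
Proof.
pose ball p r := [set s | Z s p.1 \in cball_euclid (Z p.2 p.1) r].
have mball p r : measurable (ball p r).
  apply: (measurable_mem_cball (f := fun s => Z s p.1) (g := fun=> Z p.2 p.1)).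
    exact: measurable_fun_pair1 hZ.
  exact: measurable_cst.
apply: (@measurable_limf_einf_at_right0_eq0 _ _ _
  (fun p r => (r `^ (- gamma))%:E * mu (ball p r))%E) => [p r | p r e | q].
- by rewrite mule_ge0 // lee_fin powR_ge0.
- apply: (@powR_mule_lt_at_left_rat _ _ (fun r => mu (ball p r))).
    move=> s t st; apply: le_measure; rewrite ?inE // => x.
    by rewrite /ball /= !in_setE; exact: cball_euclid_le.
  exact: fin_num_measure.
- apply: measurable_funeM.
  apply: (@measurable_measure_cball _ _ _ _ _ mu _ (fun p s => Z s p.1)).
  + apply: measurableT_comp hZ (measurable_fun_pair measurable_snd _).
    exact: (measurableT_comp (f := fst) (g := fst)).
  + exact: measurableT_comp hZ
      (measurable_fun_pair measurable_snd measurable_fst).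
Qed.
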